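(* Let $n\ge 2$ and let $\mathbf{A}$ be an $n$-dimensional cyclic Leibniz algebra over $\mathbb{C}$. Then $\mathbf{A}$ is isomorphic to one of the following Leibniz algebras $\mathbf{L}$, each having basis $\{a,a^2,\ldots,a^n\}$ with $a\,a^i=a^{i+1}$ for $1\le i<n$, $a^i v=0$ for all $i\ge2$ and all $v$, and $aa^n$ given by: (1) $aa^n=0$ (nilpotent case); (2) $aa^n=a^n$; (3) $aa^n=a^k+\alpha_{k+1}a^{k+1}+\cdots+\alpha_na^n$, for some $2\le k\le n-1$ and some $(\alpha_{k+1},\ldots,\alpha_n)\in\mathbb{C}^{n-k}$. Moreover the choice is unique in the following sense: algebras from different cases among (1), (2), (3) are non-isomorphic, and two algebras from case (3), with data $(k,(\alpha_{k+1},\ldots,\alpha_n))$ and $(k',(\alpha'_{k'+1},\ldots,\alpha'_n))$, are isomorphic if and only if $k=k'$ and $(\alpha_{k+1},\ldots,\alpha_n)\sim(\alpha'_{k+1},\ldots,\alpha'_n)$; that is, the isomorphism classes in case (3) with a given $k$ correspond to the elements of $\mathbb{C}^{n-k}/\sim$.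
   Context: A (left) Leibniz algebra is a vector space with a bilinear product such that $x(yz)=(xy)z+y(xz)$ for all $x,y,z$. A cyclic Leibniz algebra is a Leibniz algebra generated by a single element. For an element $x$ set $x^1=x$ and $x^{j+1}=x\,x^j$. For $d\ge1$, the equivalence relation $\sim$ on $\mathbb{C}^d$ is defined by $(\gamma_1,\ldots,\gamma_d)\sim(\gamma'_1,\ldots,\gamma'_d)$ iff $(\gamma_1,\gamma_2,\ldots,\gamma_d)=(\omega^d\gamma'_1,\omega^{d-1}\gamma'_2,\ldots,\omega\gamma'_d)$ for some $(d+1)$-th root of unity $\omega$. *)

From HB Require Import structures.
From mathcomp Require Import all_boot all_order all_algebra.
From mathcomp Require Import complex.
From mathcomp Require Import Rstruct.
Set Implicit Arguments. Unset Strict Implicit. Unset Printing Implicit Defensive.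
Import Order.TTheory GRing.Theory Num.Theory.
Local Open Scope ring_scope.

Definition CC : fieldType := (Rdefinitions.R)[i].

Definition bilinear_mul (V : lmodType CC) (mul : V -> V -> V) : Prop :=
  (forall (c : CC) (x y z : V), mul (c *: x + y) z = c *: mul x z + mul y z) /\
  (forall (c : CC) (x y z : V), mul z (c *: x + y) = c *: mul z x + mul z y).

Definition leibniz_identity (V : lmodType CC) (mul : V -> V -> V) : Prop :=
  forall x y z : V, mul x (mul y z) = mul (mul x y) z + mul y (mul x z).

Definition is_leibniz_algebra (V : lmodType CC) (mul : V -> V -> V) : Prop :=
  bilinear_mul mul /\ leibniz_identity mul.

Definition is_cyclic_algebra (V : vectType CC) (mul : V -> V -> V) : Prop :=
  exists x : V, forall U : {vspace V},
    x \in U -> (forall u v, u \in U -> v \in U -> mul u v \in U) -> U = fullv.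

Definition alg_iso (V W : lmodType CC) (mulV : V -> V -> V) (mulW : W -> W -> W)
  : Prop :=
  exists f : V -> W,
    (forall (c : CC) (x y : V), f (c *: x + y) = c *: f x + f y) /\
    bijective f /\
    (forall x y : V, f (mulV x y) = mulW (f x) (f y)).

(* the k-th coordinate (0-based) of a row vector, 0 if out of range *)
Definition rcoef (m : nat) (y : 'rV[CC]_m) (k : nat) : CC :=
  if insub k is Some i then y 0 i else 0.

(* The model algebra L_c on C^n with basis e_0,...,e_{n-1},
   e_{i-1} playing the role of a^i: a a^i = a^{i+1} (i < n), a a^n = c,
   a^i v = 0 for i >= 2.  Bilinearly extended:
   x * y = x_0 *: (sum_{j<n-1} y_j e_{j+1} + y_{n-1} *: c). *)
Definition model_mul (n : nat) (c : 'rV[CC]_n) (x y : 'rV[CC]_n) : 'rV[CC]_n :=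
  rcoef x 0 *: (\row_(j < n) (if j == 0%N :> nat then 0 else rcoef y j.-1)
                + rcoef y n.-1 *: c).

Definition apow (n : nat) (i : nat) : 'rV[CC]_n :=
  \row_(j < n) (if j == i.-1 :> nat then 1 else 0).

Definition c_case1 (n : nat) : 'rV[CC]_n := 0.
Definition c_case2 (n : nat) : 'rV[CC]_n := apow n n.
(* case (3): a a^n = a^k + alpha_{k+1} a^{k+1} + ... + alpha_n a^n,
   where alpha_{k+1+i} = rcoef alpha i for i < n - k *)
Definition c_case3 (n k : nat) (alpha : 'rV[CC]_(n - k)) : 'rV[CC]_n :=
  apow n k + \sum_(i < n - k) rcoef alpha i *: apow n (k + 1 + i).

(* (g_1,...,g_d) ~ (g'_1,...,g'_d) iff g_i = w^(d+1-i) g'_i for a (d+1)-th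
   root of unity w;  0-based: g_i = w^(d - i) g'_i. *)
Definition sim_rel (d : nat) (g g' : 'rV[CC]_d) : Prop :=
  exists w : CC, w ^+ d.+1 = 1 /\
    forall i : 'I_d, g 0 i = w ^+ (d - i) * g' 0 i.

(* Let [x] generate a cyclic Leibniz algebra of dimension [n], and write
   [x^(j+1) = x x^j].  The Leibniz identity gives [x^i v = 0] for [i >= 2], so
   the span of [x, ..., x^m] is a subalgebra as soon as it contains [x^(m+1)];
   hence [x, ..., x^n] is a basis, and in these coordinates the product is
   [u v = u_1 T(v)], where [T] is the companion operator of the vector
   [c = x x^n], whose first coordinate vanishes.  An isomorphism between two
   such models must send [a] to [lam a + ...], and comparing the images of
   [a^(n+1) = c] through the Cayley-Hamilton relation of [T] shows that the
   coordinate of [a^i] in [c] is scaled by [lam^(n+1-i)]; conversely the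
   rescaling [a |-> lam a] realises every such change.  Normalising the first
   nonzero coordinate of [c], at [a^k], to [1] by taking [lam] an [(n+1-k)]-th
   root leaves exactly the freedom of an [(n+1-k)]-th root of unity. *)

From HB Require Import structures.
From mathcomp Require Import all_boot all_order all_algebra complex Rstruct.
From mathcomp Require Import ring zify.
Set Implicit Arguments. Unset Strict Implicit. Unset Printing Implicit Defensive.
Import GRing.Theory Num.Theory.
Local Open Scope ring_scope.

(** * The model algebras *)

Section RowCoordinates.
Variable n : nat.
Implicit Types y z : 'rV[CC]_n.

Lemma rcoefE y (i : 'I_n) : rcoef y i = y 0 i.
Proof.
by rewrite /rcoef; case: insubP => [j _ /val_inj->|]; rewrite ?ltn_ord.
Qed.

Lemma rcoef_out y k : (n <= k)%N -> rcoef y k = 0.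
Proof. by move=> h; rewrite /rcoef insubF // ltnNge h. Qed.

Lemma rcoefP (a : CC) y z k : rcoef (a *: y + z) k = a * rcoef y k + rcoef z k.
Proof. by rewrite /rcoef; case: insubP => [i _ _|]; rewrite ?mxE ?mulr0 ?addr0. Qed.

Lemma apowE i (j : 'I_n) : apow n i 0 j = (j == i.-1 :> nat)%:R.
Proof. by rewrite mxE; case: eqP. Qed.

Lemma rcoef_apow i k : rcoef (apow n i) k = ((k == i.-1) && (k < n)%N)%:R.
Proof.
case: (ltnP k n) => [lt_kn|le_nk]; last by rewrite rcoef_out // andbF.
by rewrite -[k]/(nat_of_ord (Ordinal lt_kn)) rcoefE apowE andbT.
Qed.

Lemma sum_apowE (a : 'I_n -> CC) (j : 'I_n) :
  (\sum_(i < n) a i *: apow n i.+1) 0 j = a j.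
Proof.
rewrite summxE (bigD1 j) //= big1 ?addr0 => [|i ij]; rewrite mxE apowE /=.
  by rewrite eqxx mulr1.
by rewrite eq_sym -[_ == _]/(i == j) (negbTE ij) mulr0.
Qed.

Lemma row_sum_apow y : y = \sum_(i < n) y 0 i *: apow n i.+1.
Proof. by apply/rowP => j; rewrite sum_apowE. Qed.

End RowCoordinates.

(* Left multiplication by the generator [a = apow n 1] in the model algebra:
   it shifts [a^i] to [a^(i+1)] and sends [a^n] to [c]. *)
Definition companion n (c y : 'rV[CC]_n) : 'rV[CC]_n :=
  \row_(j < n) (if j == 0%N :> nat then 0 else rcoef y j.-1) + rcoef y n.-1 *: c.

Lemma model_mulE n (c x y : 'rV[CC]_n) : model_mul c x y = rcoef x 0 *: companion c y.
Proof. by []. Qed.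

Fact companion_is_linear n (c : 'rV[CC]_n) : linear (companion c).
Proof.
move=> a y z; apply/rowP => j; rewrite !mxE !rcoefP.
by case: (_ == _); rewrite ?mulr0 ?addr0; ring.
Qed.

HB.instance Definition _ n (c : 'rV[CC]_n) :=
  GRing.isLinear.Build CC 'rV[CC]_n 'rV[CC]_n _ (companion c) (companion_is_linear c).

Definition companion_mx n (c : 'rV[CC]_n) : 'M[CC]_n := lin1_mx (companion c).

Section CompanionMatrix.
Variables (n : nat) (c : 'rV[CC]_n).
Local Notation M := (companion_mx c).

Lemma mul_companion_mx y : y *m M = companion c y.
Proof. exact: mul_rV_lin1. Qed.

Lemma companion_apow i : (0 < i < n)%N -> companion c (apow n i) = apow n i.+1.
Proof.
move=> hi; have ni : (n.-1 == i.-1) = false by apply/negbTE; lia.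
apply/rowP => -[[|j] hj]; rewrite apowE !mxE !rcoef_apow ni mul0r addr0 /=.
  by have -> : (0 == i)%N = false by apply/negbTE; lia.
have -> : (j < n)%N by lia.
by rewrite andbT (_ : (j == i.-1) = (j.+1 == i)) //; apply/idP/idP => /eqP e; apply/eqP; lia.
Qed.

Lemma companion_apow_last : (0 < n)%N -> companion c (apow n n) = c.
Proof.
move=> n_gt0; have lt_n1n : (n.-1 < n)%N by lia.
apply/rowP => -[[|j] hj]; rewrite !mxE !rcoef_apow eqxx lt_n1n mul1r /= ?add0r //.
by rewrite (_ : (j == n.-1) = false) ?add0r //; apply/negbTE; lia.
Qed.

Lemma apow_companion_exp i : (i < n)%N -> apow n 1 *m M ^+ i = apow n i.+1.
Proof.
elim: i => [|i IHi] lt_in; first by rewrite expr0 mulmx1.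
by rewrite exprSr mulmxA IHi ?mul_companion_mx ?companion_apow //; lia.
Qed.

Lemma apow_companion_expn : (0 < n)%N -> apow n 1 *m M ^+ n = c.
Proof.
move=> n_gt0; rewrite -[X in M ^+ X](prednK n_gt0) exprSr mulmxA.
by rewrite apow_companion_exp ?prednK // mul_companion_mx companion_apow_last.
Qed.

(* Cayley-Hamilton for the companion matrix: the relation holds on the cyclic
   vector [apow n 1], hence on every row since the powers of [M] commute. *)
Lemma companion_mx_expn : (0 < n)%N -> M ^+ n = \sum_(i < n) c 0 i *: M ^+ i.
Proof.
move=> n_gt0; have expMD a b : M ^+ a *m M ^+ b = M ^+ (a + b).
  by rewrite mulmxE exprD.
apply/row_matrixP => j; rewrite !rowE.
have -> : delta_mx 0 j = apow n j.+1 by apply/rowP => k; rewrite apowE mxE eqxx.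
rewrite -(apow_companion_exp (ltn_ord j)) -mulmxA expMD addnC -expMD mulmxA.
rewrite apow_companion_expn // {1}(row_sum_apow c) mulmx_suml mulmx_sumr.
apply: eq_bigr => i _; rewrite -scalemxAl -scalemxAr; congr (_ *: _).
by rewrite -(apow_companion_exp (ltn_ord i)) -!mulmxA !expMD addnC.
Qed.

End CompanionMatrix.

(** * Isomorphisms between models *)

Section AlgebraIsomorphisms.
Variables (U V W : lmodType CC).
Variables (mU : U -> U -> U) (mV : V -> V -> V) (mW : W -> W -> W).

Lemma alg_isoP : alg_iso mV mW <->
  exists2 f : {linear V -> W}, bijective f & {morph f : x y / mV x y >-> mW x y}.
Proof.
split=> [[f [f_lin [f_bij fM]]]|[f f_bij fM]]; last first.
  by exists f; split; [move=> a x y; rewrite linearP | split].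
by exists (HB.pack_for {linear V -> W} f (GRing.isLinear.Build CC V W _ f f_lin)).
Qed.

Lemma alg_iso_refl : alg_iso mV mV.
Proof. by exists id; split=> //; split=> //; exists id. Qed.

Lemma alg_iso_trans : alg_iso mU mV -> alg_iso mV mW -> alg_iso mU mW.
Proof.
move=> [f [f_lin [f_bij fM]]] [g [g_lin [g_bij gM]]]; exists (g \o f).
split=> [a x y|]; first by rewrite /= f_lin g_lin.
by split=> [|x y]; [exact: bij_comp | rewrite /= fM gM].
Qed.

End AlgebraIsomorphisms.

(* The automorphism of the model space induced by [a |-> lam a]. *)
Definition rescale n (lam : CC) (y : 'rV[CC]_n) : 'rV[CC]_n :=
  \row_(j < n) (lam ^+ j.+1 * y 0 j).

Fact rescale_is_linear n lam : linear (@rescale n lam).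
Proof. by move=> a y z; apply/rowP => j; rewrite !mxE; ring. Qed.

HB.instance Definition _ n lam :=
  GRing.isLinear.Build CC 'rV[CC]_n 'rV[CC]_n _ (@rescale n lam) (rescale_is_linear lam).

Lemma rescaleK n (lam : CC) : lam != 0 -> cancel (@rescale n lam) (@rescale n lam^-1).
Proof.
by move=> lam0 y; apply/rowP => j; rewrite !mxE mulrA -exprMn mulVf // expr1n mul1r.
Qed.

Section Rescale.
Variables (n : nat) (lam : CC).
Implicit Types c y : 'rV[CC]_n.

Lemma rcoef_rescale y k : rcoef (rescale lam y) k = lam ^+ k.+1 * rcoef y k.
Proof.
case: (ltnP k n) => [lt_kn|le_nk]; last by rewrite !rcoef_out // mulr0.
by rewrite -[k]/(nat_of_ord (Ordinal lt_kn)) !rcoefE mxE.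
Qed.

Lemma rescale_companion c c' y :
    (forall j : 'I_n, c 0 j = lam ^+ (n - j) * c' 0 j) ->
  rescale lam (companion c y) = lam *: companion c' (rescale lam y).
Proof.
move=> hc; apply/rowP => j; have n_gt0 := leq_ltn_trans (leq0n j) (ltn_ord j).
rewrite !mxE !rcoef_rescale (prednK n_gt0) hc.
have := ltn_ord j; case: (nat_of_ord j) => [|j'] /= lt_jn.
  by rewrite subn0 expr1; ring.
have -> : lam ^+ n = lam ^+ j'.+1 * lam ^+ (n - j'.+1) by rewrite -exprD subnKC // ltnW.
by rewrite exprS; ring.
Qed.

Lemma model_iso_rescale c c' : lam != 0 ->
    (forall j : 'I_n, c 0 j = lam ^+ (n - j) * c' 0 j) ->
  alg_iso (model_mul c) (model_mul c').
Proof.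
move=> lam0 hc; apply/alg_isoP; exists (rescale lam).
  exists (rescale lam^-1); first exact: rescaleK.
  by move=> y; have := @rescaleK n lam^-1; rewrite invr_eq0 invrK => /(_ lam0 y).
move=> x y; rewrite !model_mulE linearZ /= (rescale_companion _ hc) rcoef_rescale.
by rewrite scalerA expr1 mulrC.
Qed.

End Rescale.

Section ModelIsomorphisms.
Variables (n : nat) (c c' : 'rV[CC]_n).
Hypothesis n_ge2 : (2 <= n)%N.
Local Notation M := companion_mx.

Lemma model_iso_weights : alg_iso (model_mul c) (model_mul c') ->
  exists2 lam : CC, lam != 0 & forall j : 'I_n, c 0 j = lam ^+ (n - j) * c' 0 j.
Proof.
have n_gt0 : (0 < n)%N by apply: ltnW.
move=> /alg_isoP[f [g fK gK] fM]; pose lam := rcoef (f (apow n 1)) 0.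
have fMc y : f (y *m M c) = lam *: (f y *m M c').
  have := fM (apow n 1) y; rewrite !model_mulE rcoef_apow /= n_gt0 scale1r.
  by rewrite !mul_companion_mx.
have fMc_exp m y : f (y *m M c ^+ m) = lam ^+ m *: (f y *m M c' ^+ m).
  elim: m y => [|m IHm] y; first by rewrite !expr0 !mulmx1 scale1r.
  by rewrite !exprSr !mulmxA fMc IHm -scalemxAl scalerA mulrC.
have lam_neq0 : lam != 0.
  have : apow n 2 != 0.
    by apply/eqP => /rowP/(_ (Ordinal n_ge2)) /eqP; rewrite apowE mxE /= mulr1n oner_eq0.
  apply: contraNneq => lam0; apply/eqP/(can_inj fK).
  by rewrite -(companion_apow c (i := 1)) // -mul_companion_mx fMc lam0 scale0r linear0.
exists lam => // j.
(* Compute [f c = f (a M^n)] through the Cayley-Hamilton relation of [M c']. *)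
have fc : f c = \sum_(i < n) (lam ^+ (n - i) * c' 0 i) *: f (apow n i.+1).
  rewrite -{1}(apow_companion_expn c n_gt0) fMc_exp companion_mx_expn //.
  rewrite mulmx_sumr scaler_sumr; apply: eq_bigr => i _.
  rewrite -(apow_companion_exp c (ltn_ord i)) fMc_exp -scalemxAr !scalerA.
  by congr (_ *: _); rewrite mulrAC -exprD subnK // ltnW.
have /(congr1 (fun y : 'rV[CC]_n => y 0 j)) :
    c = \sum_(i < n) (lam ^+ (n - i) * c' 0 i) *: apow n i.+1.
  by apply: (can_inj fK); rewrite fc linear_sum; apply: eq_bigr => i _; rewrite linearZ.
by rewrite sum_apowE.
Qed.

Lemma model_isoP : alg_iso (model_mul c) (model_mul c') <->
  exists2 lam : CC, lam != 0 & forall j : 'I_n, c 0 j = lam ^+ (n - j) * c' 0 j.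
Proof.
by split=> [|[lam]]; [exact: model_iso_weights | exact: model_iso_rescale].
Qed.

Lemma model_iso_coef_eq0 : alg_iso (model_mul c) (model_mul c') ->
  forall j : 'I_n, (c 0 j == 0) = (c' 0 j == 0).
Proof.
by case/model_isoP => lam lam0 hc j; rewrite hc mulf_eq0 expf_eq0 (negbTE lam0) andbF.
Qed.

End ModelIsomorphisms.

(** * Normal forms *)

Section NormalForms.
Variable n : nat.
Implicit Types c : 'rV[CC]_n.

Lemma case1E (j : 'I_n) : c_case1 n 0 j = 0.
Proof. by rewrite mxE. Qed.

Lemma case2E (j : 'I_n) : c_case2 n 0 j = (j == n.-1 :> nat)%:R.
Proof. exact: apowE. Qed.

Lemma case3E k (alpha : 'rV[CC]_(n - k)) (j : 'I_n) :
  c_case3 alpha 0 j = (j == k.-1 :> nat)%:R + (if (k <= j)%N then rcoef alpha (j - k) else 0).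
Proof.
rewrite mxE apowE summxE; congr (_ + _).
have apow_kiE (i : nat) : apow n (k + 1 + i) 0 j = (j == (k + i)%N :> nat)%:R.
  by rewrite apowE addn1 addSn.
case: ifP => [le_kj|gt_kj]; last first.
  rewrite big1 // => i _; rewrite mxE apow_kiE.
  by rewrite (_ : (j == (k + i)%N :> nat) = false) ?mulr0 //; lia.
have lt_jk : (j - k < n - k)%N by have := ltn_ord j; lia.
rewrite (bigD1 (Ordinal lt_jk)) //= big1 ?addr0 => [|i neq_i].
  by rewrite mxE apow_kiE subnKC // eqxx mulr1.
rewrite mxE apow_kiE (_ : (j == (k + i)%N :> nat) = false) ?mulr0 //.
by apply: contraNF neq_i => /eqP e; apply/eqP/val_inj => /=; lia.
Qed.

Lemma case3E_lt k (alpha : 'rV[CC]_(n - k)) (j : 'I_n) : (j < k.-1)%N -> c_case3 alpha 0 j = 0.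
Proof.
move=> lt_jk; rewrite case3E.
have -> : (j == k.-1 :> nat) = false by apply/negbTE; lia.
have -> : (k <= j)%N = false by apply/negbTE; lia.
by rewrite mulr0n addr0.
Qed.

Lemma case3E_lead k (alpha : 'rV[CC]_(n - k)) (j : 'I_n) :
  (0 < k)%N -> j = k.-1 :> nat -> c_case3 alpha 0 j = 1.
Proof.
move=> k_gt0 j_lead; rewrite case3E j_lead eqxx.
have -> : (k <= k.-1)%N = false by apply/negbTE; lia.
by rewrite mulr1n addr0.
Qed.

Section LeadingCoefficient.
Variables (c : 'rV[CC]_n) (m : 'I_n).
Hypotheses (c_lt_m : forall j : 'I_n, (j < m)%N -> c 0 j = 0) (c_m_neq0 : c 0 m != 0).

Lemma model_iso_case2 : m = n.-1 :> nat -> alg_iso (model_mul c) (model_mul (c_case2 n)).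
Proof.
move=> m_last; apply: (model_iso_rescale c_m_neq0) => j; rewrite case2E.
have [j_last|j_not_last] := eqVneq (j : nat) n.-1.
  have -> : j = m by apply: val_inj; rewrite /= j_last m_last.
  by rewrite m_last mulr1 (_ : (n - n.-1 = 1)%N) ?expr1 //; have := ltn_ord m; lia.
by rewrite mulr0 c_lt_m //; have := ltn_ord j; lia.
Qed.

Lemma model_iso_case3 : exists alpha : 'rV[CC]_(n - m.+1),
  alg_iso (model_mul c) (model_mul (c_case3 alpha)).
Proof.
have lt_mn := ltn_ord m; pose lam := (n - m).-root (c 0 m).
have lamK : lam ^+ (n - m) = c 0 m by rewrite rootCK // subn_gt0.
have lam_neq0 : lam != 0 by rewrite rootC_eq0 ?subn_gt0.
exists (\row_(i < n - m.+1) (rcoef c (m.+1 + i) / lam ^+ (n - m.+1 - i))).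
apply: (model_iso_rescale lam_neq0) => j; rewrite case3E /=.
case: (ltngtP j m) => [lt_jm|lt_mj|/val_inj->]; last 1 first.
- by rewrite mulr1n addr0 mulr1 lamK.
- by rewrite c_lt_m // mulr0n addr0 mulr0.
have lt_jmn : (j - m.+1 < n - m.+1)%N by have := ltn_ord j; lia.
rewrite mulr0n add0r -[(j - m.+1)%N]/(nat_of_ord (Ordinal lt_jmn)) rcoefE mxE /=.
rewrite subnKC // rcoefE.
rewrite (_ : (n - m.+1 - (j - m.+1) = n - j)%N); last by have := ltn_ord j; lia.
by rewrite mulrC -mulrA mulVf ?mulr1 // expf_neq0.
Qed.

End LeadingCoefficient.

Lemma model_iso_normal_form c : (2 <= n)%N -> rcoef c 0 = 0 ->
  alg_iso (model_mul c) (model_mul (c_case1 n)) \/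
  alg_iso (model_mul c) (model_mul (c_case2 n)) \/
  (exists (k : nat) (alpha : 'rV[CC]_(n - k)),
      (2 <= k <= n - 1)%N /\ alg_iso (model_mul c) (model_mul (c_case3 alpha))).
Proof.
move=> n_ge2 c0_eq0; have [->|c_neq0] := eqVneq c 0; first by left; exact: alg_iso_refl.
have [j0 c_j0_neq0] : exists j : 'I_n, c 0 j != 0.
  apply/existsP; apply: contraNT c_neq0 => /existsPn c_eq0.
  by apply/eqP/rowP => j; rewrite mxE; apply/eqP; have := c_eq0 j; rewrite negbK.
have [m c_m_neq0 m_min] := @arg_minnP _ j0 (fun j : 'I_n => c 0 j != 0) val c_j0_neq0.
have c_lt_m (j : 'I_n) : (j < m)%N -> c 0 j = 0.
  by move=> lt_jm; apply/eqP; apply: contraTT lt_jm => /m_min; rewrite -leqNgt.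
have m_gt0 : (0 < m)%N.
  by rewrite lt0n; apply: contra c_m_neq0 => /eqP m0; rewrite -rcoefE m0 c0_eq0.
right; have [m_last|m_not_last] := eqVneq (m : nat) n.-1.
  by left; exact: model_iso_case2 c_lt_m c_m_neq0 m_last.
right; have [alpha iso] := model_iso_case3 c_lt_m c_m_neq0.
by exists m.+1, alpha; split => //; have := ltn_ord m; lia.
Qed.

End NormalForms.

(** * Cyclic Leibniz algebras *)

Section CyclicLeibniz.
Variables (V : vectType CC) (mul : V -> V -> V).
Hypotheses (mul_bilin : bilinear_mul mul) (mul_leibniz : leibniz_identity mul).

Definition lmul (u : V) : V -> V := mul u.
Definition rmul (v : V) : V -> V := mul^~ v.

HB.instance Definition _ u :=
  GRing.isLinear.Build CC V V _ (lmul u) (fun a y z => mul_bilin.2 a y z u).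
HB.instance Definition _ v :=
  GRing.isLinear.Build CC V V _ (rmul v) (fun a y z => mul_bilin.1 a y z v).

Variable x : V.

(* [lpow i] is the power [x^(i+1)] of the paper, with [x^(j+1) = x x^j]. *)
Definition lpow i := iter i (mul x) x.

(* Leibniz identity for [x], [x^(i+1)], [z]: the terms [x^(i+1) w] vanish by induction. *)
Lemma mul_lpow_eq0 i z : (0 < i)%N -> mul (lpow i) z = 0.
Proof.
case: i => // i _; elim: i z => [|i IHi] z.
  by apply: (addIr (mul x (mul x z))); rewrite /= add0r -mul_leibniz.
have := mul_leibniz x (lpow i.+1) z; rewrite !IHi // -[mul x 0]/(lmul x 0) linear0 addr0.
by move/esym.
Qed.

Definition lpows m : m.-tuple V := [tuple lpow i | i < m].

Lemma lpowsE m : lpows m = mkseq lpow m :> seq V.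
Proof.
apply: (@eq_from_nth _ 0) => [|i]; rewrite size_tuple ?size_mkseq // => lt_im.
by rewrite nth_mkseq // (nth_mktuple (fun i : 'I_m => lpow i) 0 (Ordinal lt_im)).
Qed.

Lemma free_lpows m : (forall i, (i < m)%N -> lpow i \notin <<lpows i>>%VS) -> free (lpows m).
Proof.
elim: m => [|m IHm] lpow_notin; first by rewrite lpowsE /free span_nil dimv0.
rewrite lpowsE mkseqS (perm_free (_ : perm_eq _ (lpow m :: mkseq lpow m))).
  by rewrite free_cons -lpowsE lpow_notin // IHm // => i lt_im; apply/lpow_notin/ltnW.
by rewrite perm_rcons.
Qed.

Lemma lpows_stop : exists2 m, (m <= \dim {:V})%N & lpow m \in <<lpows m>>%VS.
Proof.
set d := \dim {:V}.
have [/existsP[m lpow_m]|/existsPn no_stop] :=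
  boolP [exists m : 'I_d.+1, lpow m \in <<lpows m>>%VS].
  by exists m; first rewrite -ltnS.
have /eqP := free_lpows (fun i lt_i => no_stop (Ordinal lt_i)); rewrite size_tuple => dim_span.
by have := dimvS (subvf <<lpows d.+1>>%VS); rewrite dim_span -/d ltnn.
Qed.

Lemma lpow_span m i : (i < m)%N -> lpow i \in <<lpows m>>%VS.
Proof. by move=> lt_im; apply/memv_span; rewrite lpowsE map_f // mem_iota. Qed.

Section SpanOfPowers.
Variable m : nat.
Hypothesis lpow_m : lpow m \in <<lpows m>>%VS.
Local Notation U := <<lpows m>>%VS.

Lemma lmul_span v : v \in U -> mul x v \in U.
Proof.
move=> /coord_span ->; rewrite -[mul x]/(lmul x) linear_sum; apply: memv_suml => i _.
rewrite linearZ memvZ //= nth_mktuple; change (lpow i.+1 \in U).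
have [lt_im|] := ltnP i.+1 m; first exact: lpow_span.
by move=> le_mi; rewrite (_ : i.+1 = m) //; apply/eqP; rewrite eqn_leq le_mi ltn_ord.
Qed.

Lemma x_in_span : x \in U.
Proof. by case: m lpow_m => [//|k _]; apply: (lpow_span (i := 0)). Qed.

Lemma mul_span u v : u \in U -> v \in U -> mul u v \in U.
Proof.
move=> /coord_span -> v_U; rewrite -[mul _ v]/(rmul v _) linear_sum.
apply: memv_suml => i _; rewrite linearZ memvZ //= nth_mktuple.
case: i => -[|i] lt_im; first exact: lmul_span.
by rewrite /rmul mul_lpow_eq0 ?mem0v.
Qed.

End SpanOfPowers.

Lemma basis_lpows :
    (forall W : {vspace V}, x \in W ->
       (forall u v, u \in W -> v \in W -> mul u v \in W) -> W = fullv) ->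
  basis_of fullv (lpows (\dim {:V})).
Proof.
move=> x_gen; have [m le_md lpow_m] := lpows_stop.
have span_full := x_gen _ (x_in_span lpow_m) (mul_span lpow_m).
have dim_m : \dim {:V} = m.
  have := dim_span (lpows m); rewrite span_full size_tuple => le_dm.
  by apply/eqP; rewrite eqn_leq le_md le_dm.
by rewrite dim_m /basis_of span_full eqxx /free span_full dim_m size_tuple /=.
Qed.

Section Coordinates.
Variable n : nat.
Hypothesis lpows_basis : basis_of fullv (lpows n).

Definition coords (v : V) : 'rV[CC]_n := \row_(j < n) coord (lpows n) j v.

Fact coords_is_linear : linear coords.
Proof. by move=> a u v; apply/rowP => j; rewrite !mxE linearP. Qed.

HB.instance Definition _ := GRing.isLinear.Build CC V 'rV[CC]_n _ coords coords_is_linear.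

Lemma coords_lpow i : (i < n)%N -> coords (lpow i) = apow n i.+1.
Proof.
move=> lt_in; apply/rowP => j; rewrite mxE apowE.
rewrite -(nth_mktuple (fun i : 'I_n => lpow i) 0 (Ordinal lt_in)).
by rewrite coord_free ?(basis_free lpows_basis) // eq_sym.
Qed.

Lemma lpows_coords v : v = \sum_(i < n) coords v 0 i *: lpow i.
Proof.
rewrite {1}(coord_basis lpows_basis (memvf v)); apply: eq_bigr => i _.
by rewrite mxE nth_mktuple.
Qed.

Lemma coords_bij : bijective coords.
Proof.
exists (fun r : 'rV[CC]_n => \sum_(i < n) r 0 i *: lpow i) => [v|r].
  by rewrite -lpows_coords.
apply/rowP => j; rewrite mxE -(coord_sum_free (fun i => r 0 i) _ (basis_free lpows_basis)).
by apply: congr1; apply: eq_bigr => i _; rewrite nth_mktuple.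
Qed.

Let c := coords (lpow n).

Lemma coords_lmul v : coords (mul x v) = companion c (coords v).
Proof.
rewrite {1}(lpows_coords v) {2}(row_sum_apow (coords v)) -[mul x]/(lmul x) !linear_sum.
apply: eq_bigr => i _; rewrite !linearZ /=; congr (_ *: _).
change (coords (lpow i.+1) = companion c (apow n i.+1)).
have [lt_in|] := ltnP i.+1 n; first by rewrite !coords_lpow // companion_apow.
move=> le_ni; have i_last : i.+1 = n by apply/eqP; rewrite eqn_leq le_ni ltn_ord.
by rewrite i_last companion_apow_last // -i_last.
Qed.

Lemma coords_mul u v : (0 < n)%N ->
  coords (mul u v) = model_mul c (coords u) (coords v).
Proof.
move=> n_gt0; rewrite model_mulE {1}(lpows_coords u) -[mul _ v]/(rmul v _) linear_sum.
rewrite (bigD1 (Ordinal n_gt0)) //= big1 => [|i i_neq0].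
  by rewrite addr0 -rcoefE !linearZ /= coords_lmul.
have i_gt0 : (0 < i)%N by rewrite lt0n; apply: contraNneq i_neq0 => i0; apply/eqP/val_inj.
by rewrite !linearZ /= /rmul mul_lpow_eq0 // linear0.
Qed.

Lemma lpows_model_iso : (0 < n)%N -> alg_iso mul (model_mul c).
Proof.
move=> n_gt0; apply/alg_isoP; exists coords; first exact: coords_bij.
by move=> u v; exact: coords_mul.
Qed.

(* The image of [x^(n+1) x = 0] is [c_1 a^2]. *)
Lemma rcoef_coords_lpow_0 : (2 <= n)%N -> rcoef c 0 = 0.
Proof.
move=> n_ge2; have n_gt0 := ltnW n_ge2.
have /rowP/(_ (Ordinal n_ge2)) := coords_mul (lpow n) x n_gt0.
rewrite mul_lpow_eq0 // linear0 model_mulE (coords_lpow (i := 0)) // companion_apow //.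
by rewrite !mxE /= mulr1 => /esym.
Qed.

End Coordinates.

End CyclicLeibniz.

Lemma cyclic_leibniz_model (V : vectType CC) (mul : V -> V -> V) n : (2 <= n)%N ->
    \dim {:V} = n -> is_leibniz_algebra mul -> is_cyclic_algebra mul ->
  exists2 c : 'rV[CC]_n, rcoef c 0 = 0 & alg_iso mul (model_mul c).
Proof.
move=> n_ge2 dimV [bilin leib] [x x_gen].
have := basis_lpows bilin leib x_gen; rewrite dimV => basis.
exists (coords mul x n (lpow mul x n)).
  exact: rcoef_coords_lpow_0.
exact: lpows_model_iso (ltnW n_ge2).
Qed.

Section Uniqueness.
Variable n : nat.
Hypothesis n_ge2 : (2 <= n)%N.

Lemma case1_not_iso_case2 : ~ alg_iso (model_mul (c_case1 n)) (model_mul (c_case2 n)).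
Proof.
have lt_n1n : (n.-1 < n)%N by lia.
move/(model_iso_coef_eq0 n_ge2)/(_ (Ordinal lt_n1n)).
by rewrite case1E case2E !eqxx mulr1n oner_eq0.
Qed.

Section Case3.
Variables (k : nat) (alpha : 'rV[CC]_(n - k)).
Hypotheses (k_gt0 : (0 < k)%N) (le_kn : (k <= n)%N).

Let lt_k1n : (k.-1 < n)%N. Proof. lia. Qed.

Lemma case1_not_iso_case3 : ~ alg_iso (model_mul (c_case1 n)) (model_mul (c_case3 alpha)).
Proof.
move/(model_iso_coef_eq0 n_ge2)/(_ (Ordinal lt_k1n)).
by rewrite case1E case3E_lead // eqxx oner_eq0.
Qed.

Lemma case2_not_iso_case3 : k != n ->
  ~ alg_iso (model_mul (c_case2 n)) (model_mul (c_case3 alpha)).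
Proof.
move=> neq_kn /(model_iso_coef_eq0 n_ge2)/(_ (Ordinal lt_k1n)).
rewrite case2E case3E_lead // (_ : (k.-1 == n.-1) = false) /=; last by apply/negbTE; lia.
by rewrite eqxx oner_eq0.
Qed.

Lemma case3_isoP (alpha' : 'rV[CC]_(n - k)) :
  alg_iso (model_mul (c_case3 alpha)) (model_mul (c_case3 alpha')) <-> sim_rel alpha alpha'.
Proof.
have lead_exp : (n - k.-1 = (n - k).+1)%N by lia.
rewrite model_isoP //; split=> [[w w_neq0 hc]|[w [w_root hw]]].
  exists w; split.
    by have := hc (Ordinal lt_k1n); rewrite !case3E_lead // mulr1 /= lead_exp => /esym.
  move=> i; have lt_kin : (k + i < n)%N by have := ltn_ord i; lia.
  have := hc (Ordinal lt_kin); rewrite !case3E /= leq_addr addKn subnDA.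
  have -> : ((k + i)%N == k.-1) = false by apply/negbTE; lia.
  by rewrite mulr0n !add0r -!rcoefE.
have w_neq0 : w != 0.
  by apply: contra_eq_neq w_root => ->; rewrite expr0n eq_sym oner_neq0.
exists w => // j; case: (ltngtP j k.-1) => [lt_jk|gt_jk|eq_jk].
- by rewrite !case3E_lt // mulr0.
- have lt_jkn : (j - k < n - k)%N by have := ltn_ord j; lia.
  rewrite !case3E; have -> : (j == k.-1 :> nat) = false by apply/negbTE; lia.
  have -> : (k <= j)%N by lia.
  rewrite mulr0n !add0r -[(j - k)%N]/(nat_of_ord (Ordinal lt_jkn)) !rcoefE hw /=.
  by congr (_ ^+ _ * _); lia.
- by rewrite !case3E_lead // mulr1 eq_jk lead_exp w_root.
Qed.

End Case3.

Lemma case3_not_iso_case3 k k' (alpha : 'rV[CC]_(n - k)) (alpha' : 'rV[CC]_(n - k')) :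
    (0 < k <= n)%N -> (0 < k' <= n)%N -> k != k' ->
  ~ alg_iso (model_mul (c_case3 alpha)) (model_mul (c_case3 alpha')).
Proof.
move=> hk hk' neq_kk' /(model_iso_coef_eq0 n_ge2) eq0.
wlog lt_kk' : k k' alpha alpha' hk hk' neq_kk' eq0 / (k < k')%N.
  move=> wlog_lt; have [lt_kk'|lt_k'k|eq_kk'] := ltngtP k k'.
  - exact: (wlog_lt k k' alpha alpha').
  - by apply: (wlog_lt k' k alpha' alpha) => //; rewrite eq_sym.
  - by move: neq_kk'; rewrite eq_kk' eqxx.
have [k_gt0 _] := andP hk; have lt_k1n : (k.-1 < n)%N by lia.
have := eq0 (Ordinal lt_k1n); rewrite (@case3E_lt n k' alpha' (Ordinal lt_k1n)) /=; last lia.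
by rewrite case3E_lead // eqxx oner_eq0.
Qed.

End Uniqueness.

Theorem theorem3p5 (n : nat) (hn : (2 <= n)%N) :
  (* classification *)
  (forall (V : vectType CC) (mul : V -> V -> V),
      \dim (fullv : {vspace V}) = n ->
      is_leibniz_algebra mul -> is_cyclic_algebra mul ->
      alg_iso mul (model_mul (c_case1 n)) \/
      alg_iso mul (model_mul (c_case2 n)) \/
      (exists (k : nat) (alpha : 'rV[CC]_(n - k)),
          (2 <= k <= n - 1)%N /\ alg_iso mul (model_mul (c_case3 alpha)))) /\
  (* different cases are non-isomorphic *)
  ~ alg_iso (model_mul (c_case1 n)) (model_mul (c_case2 n)) /\
  (forall (k : nat) (alpha : 'rV[CC]_(n - k)), (2 <= k <= n - 1)%N ->
      ~ alg_iso (model_mul (c_case1 n)) (model_mul (c_case3 alpha)) /\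
      ~ alg_iso (model_mul (c_case2 n)) (model_mul (c_case3 alpha))) /\
  (* case (3) with different k are non-isomorphic *)
  (forall (k k' : nat) (alpha : 'rV[CC]_(n - k)) (alpha' : 'rV[CC]_(n - k')),
      (2 <= k <= n - 1)%N -> (2 <= k' <= n - 1)%N -> k <> k' ->
      ~ alg_iso (model_mul (c_case3 alpha)) (model_mul (c_case3 alpha'))) /\
  (* case (3) with the same k: isomorphic iff the data are ~-equivalent *)
  (forall (k : nat) (alpha alpha' : 'rV[CC]_(n - k)),
      (2 <= k <= n - 1)%N ->
      (alg_iso (model_mul (c_case3 alpha)) (model_mul (c_case3 alpha'))
       <-> sim_rel alpha alpha')).
Proof.
have case3_range k : (2 <= k <= n - 1)%N -> (0 < k)%N /\ (k < n)%N by lia.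
split.
  move=> V mul dimV leib cyc; have [c c0_eq0 iso_c] := cyclic_leibniz_model hn dimV leib cyc.
  case: (model_iso_normal_form hn c0_eq0) => [iso|[iso|[k [alpha [hk iso]]]]].
  - by left; exact: alg_iso_trans iso_c iso.
  - by right; left; exact: alg_iso_trans iso_c iso.
  - by right; right; exists k, alpha; split=> //; exact: alg_iso_trans iso_c iso.
split; first exact: case1_not_iso_case2.
split.
  move=> k alpha /case3_range[k_gt0 lt_kn].
  by split; [apply: case1_not_iso_case3 | apply: case2_not_iso_case3]; lia.
split.
  move=> k k' alpha alpha' /case3_range[k_gt0 lt_kn] /case3_range[k'_gt0 lt_k'n] /eqP neq_kk'.
  by apply: case3_not_iso_case3; lia.
move=> k alpha alpha' /case3_range[k_gt0 lt_kn]; apply: case3_isoP; lia.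
Qed.
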